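(* Suppose A1–A3 hold and let $\{x_k\}$ be generated by Algorithm 1. If $\nu_k\to0$ as $k\to\infty$, then either there exists $\bar k$ with $\nabla f(x_{\bar k})=0$, or $\liminf_{k\to\infty}\|\nabla f(x_k)\|=0$. (More precisely, $\lim_{T\to\infty}\min_{k=0,\dots,T-1}\|\nabla f(x_k)\|=0$.)
   Context: Let $(X,\langle\cdot,\cdot\rangle)$ be a real Hilbert space with induced norm $\|\cdot\|$, and $f:X\to\mathbb{R}$ Fréchet differentiable with gradient $\nabla f$. Algorithm 1 (general non-monotone descent algorithm): parameters $x_0\in X$, $\alpha_0>0$, $\beta,\rho\in(0,1)$. For $k=0,1,2,\dots$: choose $d_k\in X$ with $\langle\nabla f(x_k),d_k\rangle<0$; then for $l=0,1,2,\dots$ choose a number $\nu_{k,l}\ge 0$ and test $$f(x_k+\alpha_k\beta^l d_k)\le f(x_k)+\rho\alpha_k\beta^l\langle\nabla f(x_k),d_k\rangle+\nu_{k,l};$$ let $l_k$ be the first $l$ for which this holds, set $\nu_k:=\nu_{k,l_k}$, $x_{k+1}=x_k+\alpha_k\beta^{l_k}d_k$ and $\alpha_{k+1}=\alpha_k\beta^{l_k-1}$. It is assumed the algorithm generates infinite sequences (all $l_k$ finite). Assumptions: A1: $\nabla f$ is Lipschitz continuous with constant $L>0$. A2: there is $f_{low}\in\mathbb{R}$ with $f(x)\ge f_{low}$ for all $x\in X$. A3: there are constants $c_1,c_2>0$ with $\langle\nabla f(x_k),d_k\rangle\le -c_1\|\nabla f(x_k)\|^2$ and $\|d_k\|\le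 c_2\|\nabla f(x_k)\|$ for all $k$. *)

From Stdlib Require Import Reals Lra ZArith.
Open Scope R_scope.

Record HilbertSpace := {
  hcar :> Type;
  hadd : hcar -> hcar -> hcar;
  hscal : R -> hcar -> hcar;
  hzero : hcar;
  hopp : hcar -> hcar;
  inner : hcar -> hcar -> R;
  hadd_assoc : forall x y z, hadd x (hadd y z) = hadd (hadd x y) z;
  hadd_comm : forall x y, hadd x y = hadd y x;
  hadd_zero : forall x, hadd x hzero = x;
  hadd_opp : forall x, hadd x (hopp x) = hzero;
  hscal_assoc : forall a b x, hscal a (hscal b x) = hscal (a * b) x;
  hscal_one : forall x, hscal 1 x = x;
  hscal_distr_l : forall a x y, hscal a (hadd x y) = hadd (hscal a x) (hscal a y);
  hscal_distr_r : forall a b x, hscal (a + b) x = hadd (hscal a x) (hscal b x);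
  inner_sym : forall x y, inner x y = inner y x;
  inner_add_l : forall x y z, inner (hadd x y) z = inner x z + inner y z;
  inner_scal_l : forall a x y, inner (hscal a x) y = a * inner x y;
  inner_pos : forall x, 0 <= inner x x;
  inner_def : forall x, inner x x = 0 -> x = hzero;
  hcomplete : forall u : nat -> hcar,
    (forall eps, eps > 0 -> exists N, forall m n, (N <= m)%nat -> (N <= n)%nat ->
        sqrt (inner (hadd (u m) (hopp (u n))) (hadd (u m) (hopp (u n)))) < eps) ->
    exists l, forall eps, eps > 0 -> exists N, forall n, (N <= n)%nat ->
        sqrt (inner (hadd (u n) (hopp l)) (hadd (u n) (hopp l))) < eps
}.

Arguments hadd {h}.
Arguments hscal {h}.
Arguments hzero {h}.
Arguments hopp {h}.
Arguments inner {h}.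

Definition hnorm {X : HilbertSpace} (x : X) : R := sqrt (inner x x).
Definition hsub {X : HilbertSpace} (x y : X) : X := hadd x (hopp y).

Definition frechet_gradient {X : HilbertSpace} (f : X -> R) (g : X -> X) : Prop :=
  forall x : X, forall eps, eps > 0 -> exists delta, delta > 0 /\
    forall h : X, hnorm h < delta ->
      Rabs (f (hadd x h) - f x - inner (g x) h) <= eps * hnorm h.

Definition algorithm1 {X : HilbertSpace} (f : X -> R) (g : X -> X)
  (x0 : X) (alpha0 beta rho : R)
  (x d : nat -> X) (alpha : nat -> R) (l : nat -> nat) (nu : nat -> nat -> R) : Prop :=
  x 0%nat = x0 /\ alpha 0%nat = alpha0 /\
  (forall k, inner (g (x k)) (d k) < 0) /\
  (forall k j, 0 <= nu k j) /\
  (forall k,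
     f (hadd (x k) (hscal (alpha k * beta ^ l k) (d k)))
       <= f (x k) + rho * (alpha k * beta ^ l k) * inner (g (x k)) (d k) + nu k (l k)) /\
  (forall k j, (j < l k)%nat ->
     f (hadd (x k) (hscal (alpha k * beta ^ j) (d k)))
       > f (x k) + rho * (alpha k * beta ^ j) * inner (g (x k)) (d k) + nu k j) /\
  (forall k, x (S k) = hadd (x k) (hscal (alpha k * beta ^ l k) (d k))) /\
  (forall k, alpha (S k) = alpha k * powerRZ beta (Z.of_nat (l k) - 1)).

Fixpoint min_grad_norm {X : HilbertSpace} (g : X -> X) (x : nat -> X) (n : nat) : R :=
  match n with
  | O => hnorm (g (x 0%nat))
  | S m => Rmin (min_grad_norm g x m) (hnorm (g (x (S m))))
  end.

From Stdlib Require Import Reals ZArith Lra Lia Classical.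
Open Scope R_scope.

(* The descent lemma f(x + s d) <= f x + s <g x, d> + L/2 s^2 |d|^2 shows that a
   trial step rejected by the Armijo test is at least a fixed multiple of
   (1 - rho) c1 / (L c2^2); since rejection shrinks the step by beta and
   acceptance enlarges the next trial step by 1/beta, all accepted steps stay
   above a positive floor tmin.  Each iteration then decreases f by at least
   rho c1 tmin |g(x_k)|^2 - nu_k, so if |g(x_k)| stayed above some eps > 0 from
   some index on, the vanishing of nu_k would drive f below any bound,
   contradicting f >= flow. *)

Section InnerProduct.

Variable X : HilbertSpace.
Implicit Types (a b v w y : X).

Lemma inner_zero_l y : inner hzero y = 0.
Proof. pose proof (inner_add_l X hzero hzero y) as H. rewrite hadd_zero in H. lra. Qed.

Lemma inner_zero_r y : inner y hzero = 0.
Proof. rewrite inner_sym. apply inner_zero_l. Qed.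

Lemma inner_opp_l v w : inner (hopp v) w = - inner v w.
Proof.
  pose proof (inner_add_l X v (hopp v) w) as H.
  rewrite hadd_opp, inner_zero_l in H. lra.
Qed.

Lemma inner_add_r v w y : inner v (hadd w y) = inner v w + inner v y.
Proof. rewrite inner_sym, inner_add_l, (inner_sym _ w), (inner_sym _ y). reflexivity. Qed.

Lemma inner_scal_r r v w : inner v (hscal r w) = r * inner v w.
Proof. rewrite inner_sym, inner_scal_l, (inner_sym _ w). reflexivity. Qed.

Lemma inner_opp_r v w : inner v (hopp w) = - inner v w.
Proof. rewrite inner_sym, inner_opp_l, (inner_sym _ w). reflexivity. Qed.

Lemma hnorm_nonneg v : 0 <= hnorm v.
Proof. apply sqrt_pos. Qed.

Lemma hnorm_sq v : hnorm v * hnorm v = inner v v.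
Proof. apply sqrt_sqrt, inner_pos. Qed.

Lemma hnorm_eq0 v : hnorm v = 0 -> v = hzero.
Proof. intro H. apply inner_def. rewrite <- hnorm_sq, H. ring. Qed.

Lemma hnorm_pos_of_inner_neg v w : inner v w < 0 -> 0 < hnorm v.
Proof.
  intro Hneg. destruct (hnorm_nonneg v) as [Hpos | Hzero]; [exact Hpos |].
  rewrite (hnorm_eq0 v (eq_sym Hzero)), inner_zero_l in Hneg. lra.
Qed.

Lemma hscal_zero v : hscal 0 v = hzero.
Proof. apply inner_def. rewrite inner_scal_l. ring. Qed.

Lemma hnorm_scal r v : hnorm (hscal r v) = Rabs r * hnorm v.
Proof.
  unfold hnorm. rewrite inner_scal_l, inner_scal_r, <- Rmult_assoc.
  rewrite sqrt_mult by (nra || apply inner_pos).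
  rewrite <- sqrt_Rsqr_abs. reflexivity.
Qed.

Lemma hnorm_hsub_hadd_l y v : hnorm (hsub (hadd y v) y) = hnorm v.
Proof.
  unfold hnorm, hsub. f_equal.
  repeat rewrite ?inner_add_l, ?inner_add_r, ?inner_opp_l, ?inner_opp_r.
  rewrite (inner_sym _ v y). ring.
Qed.

Lemma cauchy_schwarz a b : inner a b <= hnorm a * hnorm b.
Proof.
  pose proof (hnorm_nonneg a) as Ha. pose proof (hnorm_nonneg b) as Hb.
  (* 0 <= | |b| a - |a| b |^2 = 2 |a| |b| (|a| |b| - <a, b>) *)
  assert (Hkey : 0 <= hnorm a * hnorm b * (hnorm a * hnorm b - inner a b)).
  { pose proof (inner_pos X (hsub (hscal (hnorm b) a) (hscal (hnorm a) b))) as P.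
    unfold hsub in P.
    rewrite !inner_add_l, !inner_add_r, !inner_opp_l, !inner_opp_r,
      !inner_scal_l, !inner_scal_r, (inner_sym _ b a), <- !hnorm_sq in P.
    nra. }
  destruct Ha as [Ha | Ha]; [destruct Hb as [Hb | Hb] |].
  - assert (Hab : 0 < hnorm a * hnorm b) by (apply Rmult_lt_0_compat; assumption).
    apply Rminus_le. apply Ropp_le_cancel. rewrite Ropp_0, Ropp_minus_distr.
    apply Rmult_le_reg_l with (hnorm a * hnorm b); [exact Hab | lra].
  - rewrite <- Hb, Rmult_0_r, (hnorm_eq0 b (eq_sym Hb)). apply Req_le, inner_zero_r.
  - rewrite <- Ha, Rmult_0_l, (hnorm_eq0 a (eq_sym Ha)). apply Req_le, inner_zero_l.
Qed.

End InnerProduct.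

Section Smoothness.

Variables (X : HilbertSpace) (f : X -> R) (g : X -> X) (L : R).
Hypothesis Hf : frechet_gradient f g.
Hypothesis HL : forall y z : X, hnorm (hsub (g y) (g z)) <= L * hnorm (hsub y z).

Lemma derivable_pt_lim_line (x d : X) t :
  derivable_pt_lim (fun t => f (hadd x (hscal t d))) t (inner (g (hadd x (hscal t d))) d).
Proof.
  intros eps Heps.
  set (y := hadd x (hscal t d)).
  pose proof (hnorm_nonneg X d) as Hd.
  destruct (Hf y (eps / (2 * (hnorm d + 1)))) as [delta [Hdelta Hy]].
  { apply Rdiv_lt_0_compat; lra. }
  assert (Hp : 0 < delta / (hnorm d + 1)) by (apply Rdiv_lt_0_compat; lra).
  exists (mkposreal _ Hp). intros h Hh0 Hh. simpl in Hh.
  assert (Habs : 0 < Rabs h) by (apply Rabs_pos_lt; exact Hh0).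
  specialize (Hy (hscal h d)). rewrite hnorm_scal in Hy.
  assert (Hsmall : Rabs h * hnorm d < delta).
  { apply Rlt_le_trans with (delta / (hnorm d + 1) * (hnorm d + 1)); [nra |].
    right. field. lra. }
  specialize (Hy Hsmall).
  replace (hadd y (hscal h d)) with (hadd x (hscal (t + h) d)) in Hy
    by (unfold y; rewrite hscal_distr_r, hadd_assoc; reflexivity).
  rewrite inner_scal_r in Hy.
  replace ((f (hadd x (hscal (t + h) d)) - f y) / h - inner (g y) d)
    with ((f (hadd x (hscal (t + h) d)) - f y - h * inner (g y) d) / h) by (field; exact Hh0).
  unfold Rdiv at 1. rewrite Rabs_mult, Rabs_inv.
  apply Rle_lt_trans with (eps / (2 * (hnorm d + 1)) * (Rabs h * hnorm d) * / Rabs h).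
  { apply Rmult_le_compat_r; [left; apply Rinv_0_lt_compat |]; assumption. }
  replace (eps / (2 * (hnorm d + 1)) * (Rabs h * hnorm d) * / Rabs h)
    with (eps * (hnorm d / (2 * (hnorm d + 1)))) by (field; lra).
  assert (hnorm d / (2 * (hnorm d + 1)) < 1).
  { apply Rmult_lt_reg_r with (2 * (hnorm d + 1)); [lra |].
    unfold Rdiv. rewrite Rmult_assoc, Rinv_l; lra. }
  nra.
Qed.

Lemma descent_lemma (x d : X) s : 0 < s ->
  f (hadd x (hscal s d)) <= f x + s * inner (g x) d + L / 2 * s ^ 2 * hnorm d ^ 2.
Proof.
  intro Hs.
  (* by the Lipschitz bound psi' <= 0, so psi s <= psi 0 by the mean value theorem *)
  set (psi := fun t => f (hadd x (hscal t d)) - t * inner (g x) d - L / 2 * (t * t) * inner d d).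
  assert (Hder : forall t, derivable_pt_lim psi t
     (inner (g (hadd x (hscal t d))) d - 1 * inner (g x) d - L / 2 * (1 * t + t * 1) * inner d d)).
  { intro t. unfold psi. apply derivable_pt_lim_minus; [apply derivable_pt_lim_minus |].
    - apply derivable_pt_lim_line.
    - apply derivable_pt_lim_scal_right with (f := id). apply derivable_pt_lim_id.
    - apply derivable_pt_lim_scal_right with (f := fun t => L / 2 * (t * t)).
      apply derivable_pt_lim_scal, derivable_pt_lim_mult; apply derivable_pt_lim_id. }
  assert (pr : derivable psi) by (intro t; eexists; apply Hder).
  destruct (MVT_cor1 psi 0 s pr Hs) as [c [Hmvt Hc]].
  rewrite (derive_pt_eq_0 psi c _ (pr c) (Hder c)) in Hmvt.
  assert (Hslope : inner (g (hadd x (hscal c d))) d - inner (g x) d <= L * c * inner d d).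
  { set (dg := hsub (g (hadd x (hscal c d))) (g x)).
    pose proof (cauchy_schwarz X dg d) as CS.
    unfold dg, hsub at 1 in CS. rewrite inner_add_l, inner_opp_l in CS.
    pose proof (HL (hadd x (hscal c d)) x) as Lip.
    rewrite hnorm_hsub_hadd_l, hnorm_scal, Rabs_right in Lip by lra. fold dg in CS, Lip.
    rewrite <- hnorm_sq.
    pose proof (hnorm_nonneg X d). pose proof (hnorm_nonneg X dg). nra. }
  assert (psi s <= psi 0) by nra.
  unfold psi in H. rewrite hscal_zero, hadd_zero, <- hnorm_sq in H. lra.
Qed.

Lemma armijo_rejected_step_lower (x d : X) s rho nu c1 c2 :
  0 < L -> rho < 1 -> 0 < c1 -> 0 < c2 -> 0 < s -> 0 <= nu -> 0 < hnorm (g x) ->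
  inner (g x) d <= - c1 * hnorm (g x) ^ 2 -> hnorm d <= c2 * hnorm (g x) ->
  f (hadd x (hscal s d)) > f x + rho * s * inner (g x) d + nu ->
  2 * (1 - rho) * c1 / (L * c2 ^ 2) < s.
Proof.
  intros HL0 Hrho Hc1 Hc2 Hs Hnu HG Hangle Hdir Hrej.
  pose proof (descent_lemma x d s Hs) as Hdesc.
  set (G := hnorm (g x)) in *. set (ip := inner (g x) d) in *.
  pose proof (hnorm_nonneg X d) as Hd0.
  assert (Hgap : (1 - rho) * s * (- ip) < L / 2 * s ^ 2 * hnorm d ^ 2) by lra.
  assert (Hd2 : hnorm d ^ 2 <= c2 ^ 2 * G ^ 2) by (rewrite <- Rpow_mult_distr; apply pow_incr; lra).
  assert (HsG : 0 < s * G ^ 2) by (apply Rmult_lt_0_compat; [| apply pow_lt]; assumption).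
  assert (Hcmp : (1 - rho) * c1 * (s * G ^ 2) < L / 2 * c2 ^ 2 * s * (s * G ^ 2)).
  { assert ((1 - rho) * s * (c1 * G ^ 2) <= (1 - rho) * s * (- ip))
      by (apply Rmult_le_compat_l; nra).
    assert (L / 2 * s ^ 2 * hnorm d ^ 2 <= L / 2 * s ^ 2 * (c2 ^ 2 * G ^ 2))
      by (apply Rmult_le_compat_l; [nra | exact Hd2]).
    nra. }
  apply Rmult_lt_reg_r in Hcmp; [| exact HsG].
  assert (HLc : 0 < L * c2 ^ 2) by (apply Rmult_lt_0_compat; [| apply pow_lt]; assumption).
  replace s with (s * (L * c2 ^ 2) / (L * c2 ^ 2)) by (field; lra).
  unfold Rdiv. apply Rmult_lt_compat_r; [apply Rinv_0_lt_compat |]; lra.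
Qed.

End Smoothness.

Lemma unbounded_below_of_uniform_decrease (a e : nat -> R) c N :
  0 < c -> Un_cv e 0 -> (forall k, (N <= k)%nat -> a (S k) <= a k - c + e k) ->
  forall m, exists k, a k < m.
Proof.
  intros Hc He Hdec m.
  destruct (He (c / 2)) as [N1 HN1]; [lra |].
  set (N2 := Nat.max N N1).
  assert (Hlin : forall j, a (N2 + j)%nat <= a N2 - INR j * (c / 2)).
  { induction j as [| j IH]; [rewrite Nat.add_0_r; simpl; lra |].
    rewrite Nat.add_succ_r, S_INR.
    pose proof (Hdec (N2 + j)%nat ltac:(lia)).
    specialize (HN1 (N2 + j)%nat ltac:(lia)).
    unfold R_dist in HN1. rewrite Rminus_0_r in HN1. apply Rabs_def2 in HN1. lra. }
  destruct (Rle_or_lt (a N2) m) as [Hle | Hlt].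
  - exists (N2 + 1)%nat. specialize (Hlin 1%nat). simpl in Hlin. lra.
  - destruct (INR_archimed (c / 2) (a N2 - m) ltac:(lra)) as [j Hj].
    exists (N2 + j)%nat. specialize (Hlin j). lra.
Qed.

Lemma powerRZ_nat_pred (r : R) n : r <> 0 -> powerRZ r (Z.of_nat n - 1) = r ^ n / r.
Proof.
  intro Hr. replace (Z.of_nat n - 1)%Z with (Z.of_nat n + (-1))%Z by lia.
  rewrite powerRZ_add, <- pow_powerRZ by exact Hr. simpl. rewrite Rmult_1_r. reflexivity.
Qed.

Section Algorithm1.

Variables (X : HilbertSpace) (f : X -> R) (g : X -> X) (beta rho L c1 c2 flow : R).
Variables (x d : nat -> X) (alpha : nat -> R) (l : nat -> nat) (nu : nat -> nat -> R).

Hypothesis Hf : frechet_gradient f g.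
Hypothesis HL : forall y z : X, hnorm (hsub (g y) (g z)) <= L * hnorm (hsub y z).
Hypotheses (HL0 : 0 < L) (Hbeta : 0 < beta < 1) (Hrho : 0 < rho < 1) (Hc1 : 0 < c1) (Hc2 : 0 < c2).
Hypothesis Hlow : forall y : X, f y >= flow.
Hypothesis Hangle : forall k, inner (g (x k)) (d k) <= - c1 * hnorm (g (x k)) ^ 2.
Hypothesis Hdir : forall k, hnorm (d k) <= c2 * hnorm (g (x k)).
Hypothesis Halpha0 : 0 < alpha 0%nat.
Hypothesis Hdescent : forall k, inner (g (x k)) (d k) < 0.
Hypothesis Hnu : forall k j, 0 <= nu k j.
Hypothesis Haccept : forall k,
  f (hadd (x k) (hscal (alpha k * beta ^ l k) (d k)))
    <= f (x k) + rho * (alpha k * beta ^ l k) * inner (g (x k)) (d k) + nu k (l k).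
Hypothesis Hreject : forall k j, (j < l k)%nat ->
  f (hadd (x k) (hscal (alpha k * beta ^ j) (d k)))
    > f (x k) + rho * (alpha k * beta ^ j) * inner (g (x k)) (d k) + nu k j.
Hypothesis Hx : forall k, x (S k) = hadd (x k) (hscal (alpha k * beta ^ l k) (d k)).
Hypothesis Halpha : forall k, alpha (S k) = alpha k * powerRZ beta (Z.of_nat (l k) - 1).
Hypothesis Hnu_cv : Un_cv (fun k => nu k (l k)) 0.

Lemma alpha_succ k : alpha (S k) = alpha k * beta ^ l k / beta.
Proof. rewrite Halpha, powerRZ_nat_pred by lra. unfold Rdiv. ring. Qed.

Lemma alpha_pos k : 0 < alpha k.
Proof.
  induction k as [| k IH]; [exact Halpha0 |].
  rewrite alpha_succ. apply Rdiv_lt_0_compat; [apply Rmult_lt_0_compat, pow_lt |]; lra.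
Qed.

Lemma step_le_alpha_succ k : alpha k * beta ^ l k <= alpha (S k).
Proof.
  rewrite alpha_succ.
  assert (0 < alpha k * beta ^ l k) by (apply Rmult_lt_0_compat; [apply alpha_pos | apply pow_lt; lra]).
  unfold Rdiv. rewrite <- (Rmult_1_r (alpha k * beta ^ l k)) at 1.
  apply Rmult_le_compat_l; [lra |].
  rewrite <- Rinv_1. apply Rinv_le_contravar; lra.
Qed.

Lemma backtracked_step_lower k j : l k = S j ->
  beta * (2 * (1 - rho) * c1 / (L * c2 ^ 2)) < alpha k * beta ^ l k.
Proof.
  intro Hj. rewrite Hj, <- (tech_pow_Rmult beta j).
  replace (alpha k * (beta * beta ^ j)) with (beta * (alpha k * beta ^ j)) by ring.
  apply Rmult_lt_compat_l; [lra |].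
  eapply armijo_rejected_step_lower; eauto; try lra.
  - apply Rmult_lt_0_compat; [apply alpha_pos | apply pow_lt; lra].
  - eapply hnorm_pos_of_inner_neg, Hdescent.
  - apply Hreject. lia.
Qed.

Lemma step_ge_min k :
  Rmin (alpha k) (beta * (2 * (1 - rho) * c1 / (L * c2 ^ 2))) <= alpha k * beta ^ l k.
Proof.
  destruct (l k) as [| j] eqn:Hl.
  - rewrite pow_O, Rmult_1_r. apply Rmin_l.
  - rewrite <- Hl. left. eapply Rle_lt_trans; [apply Rmin_r | exact (backtracked_step_lower k j Hl)].
Qed.

Lemma step_bounded_below : exists tmin, 0 < tmin /\ forall k, tmin <= alpha k * beta ^ l k.
Proof.
  set (smin := beta * (2 * (1 - rho) * c1 / (L * c2 ^ 2))).
  exists (Rmin (alpha 0%nat) smin). split.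
  { apply Rmin_glb_lt; [exact Halpha0 |].
    apply Rmult_lt_0_compat; [lra |].
    apply Rdiv_lt_0_compat; [nra | apply Rmult_lt_0_compat; [| apply pow_lt]; lra]. }
  assert (Halpha_ge : forall k, Rmin (alpha 0%nat) smin <= alpha k).
  { induction k as [| k IH]; [apply Rmin_l |].
    eapply Rle_trans; [| apply step_le_alpha_succ].
    eapply Rle_trans; [| apply step_ge_min].
    apply Rmin_glb; [exact IH | apply Rmin_r]. }
  intro k. eapply Rle_trans; [| apply step_ge_min].
  apply Rmin_glb; [apply Halpha_ge | apply Rmin_r].
Qed.

Lemma sufficient_decrease tmin k : 0 <= tmin <= alpha k * beta ^ l k ->
  f (x (S k)) <= f (x k) - rho * c1 * tmin * hnorm (g (x k)) ^ 2 + nu k (l k).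
Proof.
  intros [Ht0 Ht]. rewrite Hx.
  pose proof (Haccept k) as Hacc. pose proof (Hangle k) as Hang.
  set (t := alpha k * beta ^ l k) in *. set (G2 := hnorm (g (x k)) ^ 2) in *.
  assert (0 <= G2) by (apply pow2_ge_0).
  assert (rho * t * inner (g (x k)) (d k) <= rho * t * (- c1 * G2))
    by (apply Rmult_le_compat_l; nra).
  assert (rho * c1 * tmin * G2 <= rho * c1 * t * G2).
  { apply Rmult_le_compat_r; [lra |]. apply Rmult_le_compat_l; nra. }
  nra.
Qed.

Lemma grad_norm_frequently_small eps : eps > 0 ->
  forall N, exists k, (N <= k)%nat /\ hnorm (g (x k)) < eps.
Proof.
  intros Heps N. destruct step_bounded_below as [tmin [Ht0 Ht]].
  apply NNPP. intro Hnone.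
  assert (Hlarge : forall k, (N <= k)%nat -> eps <= hnorm (g (x k))).
  { intros k Hk. apply Rnot_lt_le. intro Hlt. apply Hnone. exists k. split; assumption. }
  assert (Hc : 0 < rho * c1 * tmin * eps ^ 2)
    by (repeat apply Rmult_lt_0_compat; try apply pow_lt; lra).
  destruct (unbounded_below_of_uniform_decrease (fun k => f (x k)) (fun k => nu k (l k))
              (rho * c1 * tmin * eps ^ 2) N Hc Hnu_cv) with flow as [k Hk].
  - intros k Hk.
    pose proof (sufficient_decrease tmin k (conj (Rlt_le _ _ Ht0) (Ht k))).
    assert (eps ^ 2 <= hnorm (g (x k)) ^ 2) by (apply pow_incr; split; [lra | apply Hlarge, Hk]).
    assert (rho * c1 * tmin * eps ^ 2 <= rho * c1 * tmin * hnorm (g (x k)) ^ 2)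
      by (apply Rmult_le_compat_l; [left; repeat apply Rmult_lt_0_compat |]; lra).
    lra.
  - specialize (Hlow (x k)). lra.
Qed.

End Algorithm1.

Lemma min_grad_norm_nonneg (X : HilbertSpace) (g : X -> X) x n : 0 <= min_grad_norm g x n.
Proof.
  induction n as [| n IH]; simpl; [apply hnorm_nonneg |].
  apply Rmin_glb; [exact IH | apply hnorm_nonneg].
Qed.

Lemma min_grad_norm_le (X : HilbertSpace) (g : X -> X) x n : min_grad_norm g x n <= hnorm (g (x n)).
Proof. destruct n; simpl; [apply Rle_refl | apply Rmin_r]. Qed.

Lemma min_grad_norm_antimono (X : HilbertSpace) (g : X -> X) x m n :
  (m <= n)%nat -> min_grad_norm g x n <= min_grad_norm g x m.
Proof.
  induction 1 as [| n _ IH]; [apply Rle_refl |].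
  simpl. eapply Rle_trans; [apply Rmin_l | exact IH].
Qed.

Lemma min_grad_norm_cv_0 (X : HilbertSpace) (g : X -> X) x :
  (forall eps, eps > 0 -> exists k, hnorm (g (x k)) < eps) -> Un_cv (min_grad_norm g x) 0.
Proof.
  intros Hsmall eps Heps. destruct (Hsmall eps Heps) as [N HN].
  exists N. intros n Hn. unfold R_dist. rewrite Rminus_0_r, Rabs_right.
  - eapply Rle_lt_trans; [apply min_grad_norm_antimono, Hn |].
    eapply Rle_lt_trans; [apply min_grad_norm_le | exact HN].
  - apply Rle_ge, min_grad_norm_nonneg.
Qed.

Theorem theorem3 (X : HilbertSpace) (f : X -> R) (g : X -> X)
  (x0 : X) (alpha0 beta rho : R)
  (x d : nat -> X) (alpha : nat -> R) (l : nat -> nat) (nu : nat -> nat -> R)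
  (L flow c1 c2 : R) :
  frechet_gradient f g ->
  0 < alpha0 -> 0 < beta < 1 -> 0 < rho < 1 ->
  algorithm1 f g x0 alpha0 beta rho x d alpha l nu ->
  (* A1 *)
  L > 0 -> (forall y z : X, hnorm (hsub (g y) (g z)) <= L * hnorm (hsub y z)) ->
  (* A2 *)
  (forall y : X, f y >= flow) ->
  (* A3 *)
  c1 > 0 -> c2 > 0 ->
  (forall k, inner (g (x k)) (d k) <= - c1 * (hnorm (g (x k))) ^ 2) ->
  (forall k, hnorm (d k) <= c2 * hnorm (g (x k))) ->
  (* nu_k := nu_{k, l_k} -> 0 *)
  Un_cv (fun k => nu k (l k)) 0 ->
  ((exists kb, g (x kb) = hzero) \/
   (* liminf_k ||grad f(x_k)|| = 0 (the sequence is nonnegative) *)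
   (forall eps, eps > 0 -> forall N, exists k, (N <= k)%nat /\ hnorm (g (x k)) < eps)) /\
  (* more precisely: lim_T min_{k=0..T-1} ||grad f(x_k)|| = 0 (index shifted by one) *)
  Un_cv (fun T => min_grad_norm g x T) 0.
Proof.
  intros Hf Ha0 Hbeta Hrho Halg HL0 HL Hlow Hc1 Hc2 Hangle Hdir Hnu_cv.
  destruct Halg as (_ & Hal0 & Hdescent & Hnu & Haccept & Hreject & Hx & Halpha).
  assert (Halpha0 : 0 < alpha 0%nat) by (rewrite Hal0; exact Ha0).
  assert (Hsmall : forall eps, eps > 0 -> forall N, exists k, (N <= k)%nat /\ hnorm (g (x k)) < eps)
    by exact (grad_norm_frequently_small X f g beta rho L c1 c2 flow x d alpha l nu Hf HL HL0
                Hbeta Hrho Hc1 Hc2 Hlow Hangle Hdir Halpha0 Hdescent Hnu Haccept Hreject Hx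
                Halpha Hnu_cv).
  split; [right; exact Hsmall |].
  apply min_grad_norm_cv_0. intros eps Heps.
  destruct (Hsmall eps Heps 0%nat) as [k [_ Hk]]. exists k. exact Hk.
Qed.
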